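(* Let $n\ge4$. (i) A polyphenyl hexagonal chain $\overline{G}_n$ with $n$ hexagons has the minimum (respectively, second minimal, third minimal) Wiener index among all polyphenyl hexagonal chains with $n$ hexagons if and only if its hexagonal squeeze $G_n$ has the minimum (respectively, second minimal, third minimal) Wiener index among all spiro hexagonal chains with $n$ hexagons. (ii) $\overline{G}_n$ has the maximum (respectively, second maximal, third maximal) Wiener index among all polyphenyl hexagonal chains with $n$ hexagons if and only if $G_n$ has the maximum (respectively, second maximal, third maximal) Wiener index among all spiro hexagonal chains with $n$ hexagons.
   Context: The Wiener index is $W(G)=\sum_{\{u,v\}\subseteq V(G)}d_G(u,v)$, $d_G$ the shortest-path distance. A spiro hexagonal chain with $n$ hexagons is a connected graph whose blocks are $n$ hexagons (6-cycles) $H_0,\dots,H_{n-1}$, where $H_{k-1}$ and $H_k$ share exactly one cut-vertex for $1\le k\le n-1$, each cut-vertex is shared by exactly two hexagons and each hexagon has at most two cut-vertices. A polyphenyl hexagonal chain $\overline{G}_n=\overline{H}_0\cdots\overline{H}_{n-1}$ consists of pairwise vertex-disjoint hexagons together with cut-edges: $\overline{G}_1=\overline{H}_0$, and for $k\ge1$, $\overline{G}_{k+1}$ is obtained from $\overline{G}_k$ by adding $\overline{H}_k$ and a cut-edge joining a vertex $c_k$ of $\overline{H}_k$ to a vertex $t_k$ of $\overline{H}_{k-1}$, with $t_k\ne c_{k-1}$ for $k\ge2$. The hexagonal squeeze of $\overline{G}_n$ is the spiro hexagonal chain obtained by contracting each cut-edge $c_kt_k$ to a vertex; this gives a bijection (up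 to isomorphism) between polyphenyl and spiro hexagonal chains with $n$ hexagons. Chains are considered up to isomorphism. *)

From mathcomp Require Import all_boot.
Set Implicit Arguments. Unset Strict Implicit. Unset Printing Implicit Defensive.

(** * Generic graph notions: a graph is a vertex set [S : {set T}] with an
    adjacency relation [e : rel T] (edges only between vertices of S). *)
Section Graphs.
Variable T : finType.

Definition nbhd (e : rel T) (A : {set T}) : {set T} :=
  A :|: [set y | [exists x in A, e x y]].

Definition ball (e : rel T) (m : nat) (u : T) : {set T} := iter m (nbhd e) [set u].

(** shortest-path distance: least m with v reachable within m steps
    (any shortest path has length < #|T|; unreachable pairs, which do not
    occur in connected graphs, get #|T|) *)
Definition gdist (e : rel T) (u v : T) : nat :=
  find (fun m => v \in ball e m u) (iota 0 #|T|).

(** Wiener index: sum over unordered pairs {u,v} of d(u,v),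
    i.e. half the sum over ordered pairs (d(u,u) = 0, d symmetric). *)
Definition wiener (S : {set T}) (e : rel T) : nat :=
  (\sum_(u in S) \sum_(v in S) gdist e u v) %/ 2.
End Graphs.

(** * Chains of n hexagons.  Vertices are pairs (k, i): vertex i (0..5,
    in cyclic order) of hexagon H_k. *)
Definition vtx (n : nat) : finType := ('I_n * 'I_6)%type.

(** Chain data: c k = position (in H_k) and t k = position (in H_{k-1}) of the
    attachment for k = 1..n-1 (the value at k = 0 is irrelevant). *)
Definition chain_data (n : nat) : finType :=
  ({ffun 'I_n -> 'I_6} * {ffun 'I_n -> 'I_6})%type.

Definition cpos n (d : chain_data n) (k : 'I_n) : 'I_6 := d.1 k.
Definition tpos n (d : chain_data n) (k : 'I_n) : 'I_6 := d.2 k.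

Definition prevo n (k : 'I_n) : 'I_n :=
  Ordinal (leq_ltn_trans (leq_pred k) (ltn_ord k)).

(** the condition t_k <> c_{k-1} for k >= 2 (polyphenyl), equivalently
    each cut-vertex lies in exactly two hexagons and each hexagon has at most
    two cut-vertices (spiro) *)
Definition valid_chain n (d : chain_data n) : bool :=
  [forall k : 'I_n, (1 < k) ==> (tpos d k != cpos d (prevo k))].

Definition hexedge n (u v : vtx n) : bool :=
  (u.1 == v.1) &&
  ((val v.2 == (val u.2).+1 %% 6) || (val u.2 == (val v.2).+1 %% 6)).

Definition cutedge n (d : chain_data n) (u v : vtx n) : bool :=
  (0 < val u.1) && (u.2 == cpos d u.1) && (v == (prevo u.1, tpos d u.1)).

Definition poly_adj n (d : chain_data n) : rel (vtx n) :=
  fun u v => [|| hexedge u v, cutedge d u v | cutedge d v u].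

Definition W_poly n (d : chain_data n) : nat := wiener [set: vtx n] (poly_adj d).

(** hexagonal squeeze: contract each cut-edge c_k t_k to the vertex t_k *)
Definition rep n (d : chain_data n) (x : vtx n) : vtx n :=
  if (0 < val x.1) && (x.2 == cpos d x.1) then (prevo x.1, tpos d x.1) else x.

Definition spiro_vertices n (d : chain_data n) : {set vtx n} :=
  [set x | rep d x == x].

Definition spiro_adj n (d : chain_data n) : rel (vtx n) :=
  fun u v => [exists x, exists y, [&& hexedge x y, rep d x == u & rep d y == v]].

Definition W_spiro n (d : chain_data n) : nat :=
  wiener (spiro_vertices d) (spiro_adj d).

Definition poly_W_values n : seq nat :=
  [seq W_poly d | d <- enum (chain_data n) & valid_chain d].
Definition spiro_W_values n : seq nat :=
  [seq W_spiro d | d <- enum (chain_data n) & valid_chain d].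

Definition kth_min (k : nat) (s : seq nat) (w : nat) : bool :=
  (w \in s) && (size (undup [seq x <- s | x < w]) == k.-1).
Definition kth_max (k : nat) (s : seq nat) (w : nat) : bool :=
  (w \in s) && (size (undup [seq x <- s | w < x]) == k.-1).

From mathcomp Require Import all_boot zify.
Set Implicit Arguments. Unset Strict Implicit. Unset Printing Implicit Defensive.

(* In both chains the distance from vertex a of H_i to vertex b of H_j, i < j, has a closed
   form: from a to the exit t_(i+1) of H_i, across each intermediate H_k along the arc of
   length l_k = d(c_k, t_(k+1)), and from the entry c_j of H_j to b, plus one for each
   cut-edge in the polyphenyl chain.  Summing over pairs of hexagons, both Wiener indices
   become affine in the l_k, and with weights 25 and 36 the dependence on the l_k cancels:
   25 W(polyphenyl) - 36 W(spiro) depends on n only.  So on chains with n hexagons the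
   polyphenyl index is a strictly increasing function of the spiro index, the two orders
   coincide, and the equivalences hold for every rank k; of the hypotheses only n >= 1 is
   used. *)

Lemma find_iota (P : pred nat) N m x : x < N -> P (m + x) ->
  (forall y, y < x -> ~~ P (m + y)) -> find P (iota m N) = x.
Proof.
elim: N m x => [//|N IH] m [|x] ltxN Px minx /=; first by rewrite addn0 in Px; rewrite Px.
have := minx 0 isT; rewrite addn0 => /negbTE ->.
rewrite (IH m.+1 x) //; first by rewrite addSnnS.
by move=> y ltyx; rewrite addSnnS; apply: minx.
Qed.

Section DistanceCharacterization.
Variables (T : finType) (e : rel T) (u : T) (D : T -> nat) (B : nat).
Hypothesis D_root : D u = 0.
Hypothesis D_eq0 : forall v, D v = 0 -> v = u.
Hypothesis D_edge : forall x v, e x v -> D v <= (D x).+1.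
Hypothesis D_pred : forall v, 0 < D v < B -> exists2 x, e x v & (D x).+1 = D v.

Lemma mem_ball m v : m < B -> (v \in ball e m u) = (D v <= m).
Proof.
elim: m v => [|m IH] v ltmB.
  by rewrite /ball /= in_set1 leqn0; apply/eqP/eqP => [->|/D_eq0].
rewrite /ball iterS -/(ball e m u) /nbhd in_setU in_set IH ?(ltnW ltmB) //.
apply/idP/idP => [/orP[/leqW //|/existsP[x /andP[xm exv]]]|Dv].
  by rewrite IH ?(ltnW ltmB) // in xm; apply: leq_trans (D_edge exv) _.
have [//|ltmD] := leqP (D v) m; apply/orP; right.
have Dv1 : D v = m.+1 by apply/eqP; rewrite eqn_leq Dv.
have [x exv Dx] : exists2 x, e x v & (D x).+1 = D v by apply: D_pred; rewrite Dv1.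
by apply/existsP; exists x; rewrite exv IH ?(ltnW ltmB) // -ltnS Dx Dv1 andbT.
Qed.

Lemma gdist_eq v : B <= #|T| -> D v < B -> gdist e u v = D v.
Proof.
move=> leBT ltvB; apply: find_iota; first exact: leq_trans leBT.
  by rewrite add0n mem_ball.
by move=> y ltyD; rewrite add0n mem_ball ?(ltn_trans ltyD) // -ltnNge.
Qed.
End DistanceCharacterization.

Definition hexd (a b : 'I_6) : nat := let x := (a + 6 - b) %% 6 in minn x (6 - x).
Definition hexadj (a b : 'I_6) : bool :=
  (val b == (val a).+1 %% 6) || (val a == (val b).+1 %% 6).

Ltac case_I6 x := case: x => [[|[|[|[|[|[|//]]]]]] ?].

Lemma hexdC a b : hexd a b = hexd b a.
Proof. by case_I6 a; case_I6 b. Qed.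
Lemma hexd_le3 a b : hexd a b <= 3.
Proof. by case_I6 a; case_I6 b. Qed.
Lemma hexd_eq0 a b : (hexd a b == 0) = (a == b).
Proof. by case_I6 a; case_I6 b. Qed.
Lemma hexdxx a : hexd a a = 0.
Proof. by apply/eqP; rewrite hexd_eq0. Qed.
Lemma hexd_adj a b b' : hexadj b b' -> hexd a b' <= (hexd a b).+1.
Proof. by case_I6 a; case_I6 b; case_I6 b'. Qed.

Lemma hexd_pred a b : a != b -> exists2 b', hexadj b' b & (hexd a b').+1 = hexd a b.
Proof.
case_I6 a; case_I6 b => // _;
  first [ by exists (@Ordinal 6 0 isT) | by exists (@Ordinal 6 1 isT)
        | by exists (@Ordinal 6 2 isT) | by exists (@Ordinal 6 3 isT)
        | by exists (@Ordinal 6 4 isT) | by exists (@Ordinal 6 5 isT) ].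
Qed.

Lemma sum_hexd a : \sum_b hexd a b = 9.
Proof. by rewrite !big_ord_recr big_ord0 /=; case_I6 a. Qed.
Lemma sum_hexd_l b : \sum_a hexd a b = 9.
Proof. by rewrite -(sum_hexd b); apply: eq_bigr => a _; rewrite hexdC. Qed.

Section ChainDistance.
Variables (n : nat) (d : chain_data n).

(* Total versions of [cpos d] and [tpos d]; their values at k >= n are junk. *)
Definition cnat (k : nat) : 'I_6 := odflt ord0 (omap (cpos d) (insub k)).
Definition tnat (k : nat) : 'I_6 := odflt ord0 (omap (tpos d) (insub k)).

Lemma cnatE (k : 'I_n) : cnat k = cpos d k. Proof. by rewrite /cnat valK. Qed.
Lemma tnatE (k : 'I_n) : tnat k = tpos d k. Proof. by rewrite /tnat valK. Qed.

Definition link (k : nat) : nat := hexd (cnat k) (tnat k.+1).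
Definition links (i j : nat) : nat := \sum_(i.+1 <= k < j) link k.
Definition exitd (i : nat) (a : 'I_6) : nat := hexd a (tnat i.+1).
Definition entryd (j : nat) (b : 'I_6) : nat := hexd (cnat j) b.

(* [w] is the length of a cut-edge: 1 in the polyphenyl chain, 0 once squeezed. *)
Definition chain_dist (w i : nat) (a : 'I_6) (j : nat) (b : 'I_6) : nat :=
  if i == j then hexd a b
  else if i < j then exitd i a + w * (j - i) + links i j + entryd j b
  else exitd j b + w * (i - j) + links j i + entryd i a.

(* Every shortest path from (i, a) enters the hexagon H_k through [gate i a k]. *)
Definition gate (i : nat) (a : 'I_6) (k : nat) : 'I_6 :=
  if k == i then a else if i < k then cnat k else tnat k.+1.

Lemma chain_distC w i a j b : chain_dist w i a j b = chain_dist w j b i a.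
Proof.
rewrite /chain_dist eq_sym; have [_|neji] := eqVneq j i; first exact: hexdC.
by case: ltngtP => // eqij; rewrite eqij eqxx in neji.
Qed.

Lemma chain_dist_gate w i a k b :
  chain_dist w i a k b = chain_dist w i a k (gate i a k) + hexd (gate i a k) b.
Proof.
rewrite /chain_dist /gate; have [_ | neki] := eqVneq k i.
  by rewrite hexdxx.
case: ltnP => _; first by rewrite /entryd hexdxx addn0.
by rewrite /exitd hexdxx [hexd b _]hexdC; lia.
Qed.

Lemma chain_dist_adj w i a k b b' :
  hexadj b b' -> chain_dist w i a k b' <= (chain_dist w i a k b).+1.
Proof.
move=> adj_bb'; rewrite (chain_dist_gate w i a k b) (chain_dist_gate w i a k b').
by rewrite -addnS leq_add2l hexd_adj.
Qed.

Lemma chain_dist_pred w i a k b : b != gate i a k ->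
  exists2 b', hexadj b' b & (chain_dist w i a k b').+1 = chain_dist w i a k b.
Proof.
rewrite eq_sym => /hexd_pred[b' adj_b'b hexd_b'].
exists b' => //.
by rewrite (chain_dist_gate w i a k b) (chain_dist_gate w i a k b') -hexd_b' addnS.
Qed.

Lemma links_nil i : links i i.+1 = 0.
Proof. by rewrite /links big_geq. Qed.
Lemma links_recr i k : i < k -> links i k.+1 = links i k + link k.
Proof. by move=> ltik; rewrite /links big_nat_recr. Qed.
Lemma links_recl i k : i.+1 < k -> links i k = link i.+1 + links i.+1 k.
Proof. by move=> ltik; rewrite /links big_ltn. Qed.

Lemma links_le i j : links i j <= 3 * (j - i.+1).
Proof.
apply: (@leq_trans (\sum_(i.+1 <= k < j) 3)); last by rewrite sum_nat_const_nat mulnC.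
by apply: leq_sum => k _; apply: hexd_le3.
Qed.

Lemma links0E j : links 0 j = \sum_(i < j) (if 0 < i then link i else 0).
Proof. by rewrite /links big_geq_mkord big_mkcondr. Qed.

Lemma chain_dist_cut_away w i a k : 0 < k -> i < k ->
  chain_dist w i a k (cnat k) = chain_dist w i a k.-1 (tnat k) + w.
Proof.
case: k => // k _ ltik; rewrite /chain_dist /= ltik /entryd hexdxx addn0.
rewrite (_ : (i == k.+1) = false); last by apply/negbTE; lia.
have [->|neik] := eqVneq i k; first by rewrite /exitd links_nil subSnn; lia.
have ltik' : i < k by rewrite ltn_neqAle neik -ltnS.
by rewrite ltik' links_recr // subSn 1?(ltnW ltik') /link /exitd; lia.
Qed.

Lemma chain_dist_cut_toward w i a k : 0 < k -> k <= i ->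
  chain_dist w i a k.-1 (tnat k) = chain_dist w i a k (cnat k) + w.
Proof.
case: k => // k _ leki; rewrite /chain_dist /= /exitd hexdxx add0n.
have [-> ->] : (i == k) = false /\ (i < k) = false by split; apply/negbTE; lia.
have [->|neik] := eqVneq i k.+1; first by rewrite links_nil subSnn /entryd hexdC; lia.
rewrite (_ : (i < k.+1) = false); last by apply/negbTE; lia.
by rewrite (links_recl (k := i)) 1?subSn /link /entryd; lia.
Qed.

Lemma chain_dist_lt w i a j b : w <= 1 -> i < n -> j < n ->
  chain_dist w i a j b < 6 * n.
Proof.
move=> lew1 ltin ltjn; rewrite /chain_dist /exitd /entryd.
have := hexd_le3 a b; have := links_le i j; have := links_le j i.
have := hexd_le3 a (tnat i.+1); have := hexd_le3 b (tnat j.+1).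
have := hexd_le3 (cnat j) b; have := hexd_le3 (cnat i) a.
have : w * (j - i) <= j - i by nia.
have : w * (i - j) <= i - j by nia.
by case: (ltngtP i j); lia.
Qed.
End ChainDistance.

Section PolyphenylDistance.
Variables (n : nat) (d : chain_data n).

Definition vdist (w : nat) (u v : vtx n) : nat := chain_dist d w u.1 u.2 v.1 v.2.

Lemma card_vtx : #|vtx n| = 6 * n.
Proof. by rewrite card_prod !card_ord mulnC. Qed.

Lemma hexedgeE (x v : vtx n) : hexedge x v -> x.1 = v.1 /\ hexadj x.2 v.2.
Proof. by case/andP => /eqP. Qed.

Lemma cutedgeE (x v : vtx n) : cutedge d x v ->
  [/\ 0 < val x.1, x.2 = cnat d x.1 & v = (prevo x.1, tnat d x.1)].
Proof. by case/andP => /andP[x1_gt0 /eqP ->] /eqP ->; rewrite cnatE tnatE. Qed.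

Lemma vdistxx w u : vdist w u u = 0.
Proof. by rewrite /vdist /chain_dist eqxx hexdxx. Qed.

Lemma vdist_lt w u v : w <= 1 -> vdist w u v < 6 * n.
Proof. by move=> lew1; apply: chain_dist_lt. Qed.

Lemma vdist1_eq0 u v : vdist 1 u v = 0 -> v = u.
Proof.
case: u v => [[i ltin] a] [[j ltjn] b]; rewrite /vdist /chain_dist /=.
have [eqij|neij] := eqVneq i j; last by case: ltnP; lia.
by move/eqP; rewrite hexd_eq0 => /eqP ->; congr pair; apply: val_inj.
Qed.

Lemma vdist_poly_edge u x v : poly_adj d x v -> vdist 1 u v <= (vdist 1 u x).+1.
Proof.
rewrite /vdist; case/or3P => [/hexedgeE[<-]|/cutedgeE[x1_gt0 -> ->]|/cutedgeE[v1_gt0 -> ->]] /=.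
- exact: chain_dist_adj.
- case: (ltnP u.1 x.1) => cmp.
    by rewrite chain_dist_cut_away // addn1 leqW.
  by rewrite chain_dist_cut_toward // addn1.
- case: (ltnP u.1 v.1) => cmp.
    by rewrite chain_dist_cut_away // addn1.
  by rewrite chain_dist_cut_toward // addn1 leqW.
Qed.

Lemma vdist_poly_pred u v : 0 < vdist 1 u v ->
  exists2 x, poly_adj d x v & (vdist 1 u x).+1 = vdist 1 u v.
Proof.
case: u v => i a [j b]; rewrite /vdist /= => dist_gt0.
have [b_gate|b_ngate] := eqVneq b (gate d i a j); last first.
  have [b' adj_b'b dist_b'] := chain_dist_pred 1 b_ngate.
  by exists (j, b') => //; apply/orP; left; rewrite /hexedge eqxx.
have neji : j != i :> nat.
  by apply: contraTneq dist_gt0 => eqji; rewrite b_gate /gate eqji eqxx /chain_dist eqxx hexdxx.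
case: (ltngtP i j) => [cmp|cmp|eqij]; last by rewrite eqij eqxx in neji.
- have j_gt0 : 0 < val j := leq_ltn_trans (leq0n i) cmp.
  have b_c : b = cnat d j by rewrite b_gate /gate (negbTE neji) cmp.
  exists (prevo j, tpos d j).
    by rewrite /poly_adj /cutedge /= j_gt0 b_c cnatE !eqxx !orbT.
  by rewrite b_c chain_dist_cut_away // addn1 /= tnatE.
- have ltj1n : j.+1 < n by apply: leq_ltn_trans cmp (ltn_ord i).
  pose k := Ordinal ltj1n.
  have prevo_k : prevo k = j by apply: val_inj.
  have b_t : b = tnat d k by rewrite b_gate /gate (negbTE neji) ltnNge (ltnW cmp).
  exists (k, cpos d k).
    by rewrite /poly_adj /cutedge /= prevo_k b_t tnatE !eqxx !orbT.
  by have := @chain_dist_cut_toward n d 1 i a k isT cmp; rewrite /= -cnatE -b_t addn1 => ->.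
Qed.

Lemma gdist_poly u v : gdist (poly_adj d) u v = vdist 1 u v.
Proof.
apply: (@gdist_eq _ _ _ _ (6 * n)); rewrite ?card_vtx ?vdist_lt //.
- exact: vdistxx.
- by move=> w /vdist1_eq0.
- exact: vdist_poly_edge.
- by move=> w /andP[+ _]; apply: vdist_poly_pred.
Qed.
End PolyphenylDistance.

Section SpiroDistance.
Variables (n : nat) (d : chain_data n).

Definition kept (i : nat) (a : 'I_6) : bool := ~~ ((0 < i) && (a == cnat d i)).

Lemma vdist0_rep u y : vdist d 0 u (rep d y) = vdist d 0 u y.
Proof.
rewrite /rep; case: ifP => // /andP[y1_gt0 /eqP y2_c].
rewrite /vdist /= y2_c -cnatE -tnatE.
case: (ltnP u.1 y.1) => cmp.
  by rewrite chain_dist_cut_away // addn0.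
by rewrite chain_dist_cut_toward // addn0.
Qed.

Lemma spiro_verticesE (u : vtx n) : (u \in spiro_vertices d) = kept u.1 u.2.
Proof.
rewrite inE /rep /kept cnatE; case: ifP => [/andP[u1_gt0 _]|_]; last by rewrite eqxx.
apply/negbTE; case: u u1_gt0 => [i a] /= i_gt0; apply/eqP => -[/(congr1 val) /=].
by move/eqP; rewrite ltn_eqF // ltn_predL.
Qed.

Lemma chain_dist0_gt0 i a j b : i < j -> kept j b -> 0 < chain_dist d 0 i a j b.
Proof.
move=> ltij; rewrite /kept (leq_ltn_trans (leq0n i) ltij) /= => b_kept.
rewrite /chain_dist (ltn_eqF ltij) ltij; apply: leq_trans (leq_addl _ _).
by rewrite lt0n /entryd hexd_eq0 eq_sym.
Qed.

(* Contracted vertices are put out of reach, so that [gdist_eq] applies on all of [vtx n]. *)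
Definition sdist (u v : vtx n) : nat :=
  if v \in spiro_vertices d then vdist d 0 u v else 6 * n.

Lemma spiro_adjP x v : reflect
  (exists x0 y0, [/\ hexedge x0 y0, rep d x0 = x & rep d y0 = v]) (spiro_adj d x v).
Proof.
apply: (iffP existsP) => [[x0 /existsP[y0 /and3P[x0y0 /eqP <- /eqP <-]]]|].
  by exists x0, y0.
by case=> x0 [y0 [x0y0 <- <-]]; exists x0; apply/existsP; exists y0; rewrite x0y0 !eqxx.
Qed.

Lemma sdist_eq0 u v : u \in spiro_vertices d -> sdist u v = 0 -> v = u.
Proof.
move=> u_sp; rewrite /sdist; case: ifP => v_sp; last first.
  by move=> n0; exfalso; have := ltn_ord u.1; lia.
case: u v u_sp v_sp => [i a] [j b]; rewrite !spiro_verticesE /vdist /= => u_kept v_kept.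
case: (ltngtP i j) => [ltij|ltji|eqij] dist0.
- by have := chain_dist0_gt0 a ltij v_kept; rewrite dist0.
- by have := chain_dist0_gt0 b ltji u_kept; rewrite -chain_distC dist0.
- move/eqP: dist0; rewrite /chain_dist eqij eqxx hexd_eq0 => /eqP ->.
  by congr pair; apply: val_inj.
Qed.

Hypothesis d_valid : valid_chain d.

Lemma tnat_neq_cnat k : 0 < k -> k.+1 < n -> tnat d k.+1 != cnat d k.
Proof.
move=> k_gt0 ltk1n; have := forallP d_valid (Ordinal ltk1n).
rewrite /= ltnS k_gt0 /=.
have -> : prevo (Ordinal ltk1n) = Ordinal (ltnW ltk1n) by apply: val_inj.
by rewrite -tnatE -cnatE.
Qed.

Lemma cnat_neq_gate i a k : i < n -> kept i a -> 0 < k <= i -> cnat d k != gate d i a k.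
Proof.
move=> ltin; rewrite /kept /gate => a_kept /andP[k_gt0 leki].
have [eqki|neki] := eqVneq k i; first by move: a_kept; rewrite -eqki k_gt0 eq_sym.
rewrite ltnNge leki eq_sym tnat_neq_cnat //.
by apply: leq_ltn_trans ltin; rewrite ltn_neqAle neki.
Qed.

Lemma rep_idem y : rep d (rep d y) = rep d y.
Proof.
rewrite {2 3}/rep; case: ifP => [/andP[y1_gt0 _]|y_kept]; last by rewrite /rep y_kept.
rewrite /rep /=; have [y1_gt1|] := boolP (1 < y.1).
  by have := forallP d_valid y.1; rewrite y1_gt1 /= => /negbTE ->; rewrite andbF.
rewrite -leqNgt => y1_le1.
by have -> : (y.1 : nat) = 1 by apply/eqP; rewrite eqn_leq y1_le1.
Qed.

Lemma rep_spiro y : rep d y \in spiro_vertices d.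
Proof. by rewrite inE rep_idem. Qed.

Lemma sdist_edge u x v : spiro_adj d x v -> sdist u v <= (sdist u x).+1.
Proof.
case/spiro_adjP => x0 [y0 [/hexedgeE[eq_hex adj] <- <-]].
by rewrite /sdist !rep_spiro !vdist0_rep /vdist -eq_hex chain_dist_adj.
Qed.

Lemma spiro_step (u y : vtx n) : y.2 != gate d u.1 u.2 y.1 ->
  exists2 x, spiro_adj d x (rep d y) & (sdist u x).+1 = vdist d 0 u y.
Proof.
case: y => k b /= b_ngate; have [b' adj_b'b dist_b'] := chain_dist_pred 0 b_ngate.
exists (rep d (k, b')); last by rewrite /sdist rep_spiro vdist0_rep.
by apply/spiro_adjP; exists (k, b'), (k, b); split=> //; rewrite /hexedge eqxx.
Qed.

Lemma sdist_pred u v : u \in spiro_vertices d -> 0 < sdist u v < 6 * n ->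
  exists2 x, spiro_adj d x v & (sdist u x).+1 = sdist u v.
Proof.
move=> u_sp; rewrite /sdist; case: ifP => v_sp; last by rewrite ltnn andbF.
case/andP=> dist_gt0 _; have rep_v : rep d v = v by apply/eqP; rewrite inE in v_sp.
have [b_gate|b_ngate] := eqVneq v.2 (gate d u.1 u.2 v.1); last first.
  by have [x] := spiro_step b_ngate; rewrite rep_v; exists x.
case: u v u_sp v_sp dist_gt0 rep_v b_gate => [i a] [j b].
rewrite !spiro_verticesE /vdist /= => u_kept v_kept dist_gt0 rep_v b_gate.
have neij : i != j :> nat.
  by apply: contraTneq dist_gt0 => eqij; rewrite b_gate /gate /chain_dist eqij !eqxx hexdxx.
have neji : (j == i :> nat) = false by rewrite eq_sym (negbTE neij).
case: (ltngtP i j) => [ltij|ltji|eqij]; last by rewrite eqij eqxx in neij.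
  by move: v_kept; rewrite /kept b_gate /gate neji ltij (leq_ltn_trans _ ltij) ?eqxx.
have ltj1n : j.+1 < n := leq_ltn_trans ltji (ltn_ord i).
pose k := Ordinal ltj1n.
have rep_k : rep d (k, cnat d k) = (j, b).
  rewrite /rep cnatE eqxx b_gate /gate neji (leq_gtF (ltnW ltji)) /= -tnatE.
  by congr pair; apply: val_inj.
have [|x x_adj x_dist] := @spiro_step (i, a) (k, cnat d k).
  by apply: cnat_neq_gate => //=; rewrite ltji.
rewrite -vdist0_rep rep_k in x_dist.
by exists x; rewrite // -rep_k.
Qed.

Lemma gdist_spiro u v : u \in spiro_vertices d -> v \in spiro_vertices d ->
  gdist (spiro_adj d) u v = vdist d 0 u v.
Proof.
move=> u_sp v_sp; have -> : vdist d 0 u v = sdist u v by rewrite /sdist v_sp.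
apply: (@gdist_eq _ _ _ _ (6 * n)); rewrite ?card_vtx //.
- by rewrite /sdist u_sp vdistxx.
- by move=> w; apply: sdist_eq0.
- exact: sdist_edge.
- by move=> w; apply: sdist_pred.
- by rewrite /sdist v_sp vdist_lt.
Qed.
End SpiroDistance.

Lemma sum_sym_ord n (F : 'I_n -> 'I_n -> nat) : (forall i j, F i j = F j i) ->
  \sum_(i < n) \sum_(j < n) F i j =
  \sum_(i < n) F i i + 2 * \sum_(i < n) \sum_(j < n | i < j) F i j.
Proof.
move=> FC.
have split_row i : \sum_(j < n) F i j =
    F i i + (\sum_(j < n | i < j) F i j + \sum_(j < n | j < i) F i j).
  rewrite (bigD1 i) //= (bigID (fun j : 'I_n => i < j)) /=.
  congr (_ + (_ + _)); apply: eq_bigl => j.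
    by rewrite andb_idl // => ltij; apply: contraTneq ltij => ->; rewrite ltnn.
  by rewrite -leqNgt ltn_neqAle.
have lower_upper : \sum_(i < n) \sum_(j < n | j < i) F i j =
                   \sum_(i < n) \sum_(j < n | i < j) F i j.
  rewrite (exchange_big_dep xpredT) //=; apply: eq_bigr => i _.
  by apply: eq_bigr => j _; rewrite FC.
by rewrite (eq_bigr _ (fun i _ => split_row i)) !big_split /= lower_upper addnn mul2n.
Qed.

Lemma big_neq_sub (I : finType) (c : I) (F : I -> nat) :
  \sum_(x | x != c) F x = \sum_x F x - F c.
Proof. by rewrite [in RHS](bigD1 c) //= addKn. Qed.

Lemma sum_I6_addl (K : nat) (F : 'I_6 -> nat) : \sum_b (K + F b) = 6 * K + \sum_b F b.
Proof. by rewrite big_split /= sum_nat_const card_ord. Qed.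

Section Blocks.
Variables (n : nat) (d : chain_data n).

Definition poly_block (i j : nat) : nat := \sum_a \sum_b chain_dist d 1 i a j b.
Definition spiro_block (i j : nat) : nat :=
  \sum_a \sum_b (if kept d i a && kept d j b then chain_dist d 0 i a j b else 0).

Lemma poly_blockC i j : poly_block i j = poly_block j i.
Proof.
rewrite /poly_block exchange_big; apply: eq_bigr => a _; apply: eq_bigr => b _.
exact: chain_distC.
Qed.

Lemma spiro_blockC i j : spiro_block i j = spiro_block j i.
Proof.
rewrite /spiro_block exchange_big; apply: eq_bigr => a _; apply: eq_bigr => b _.
by rewrite andbC chain_distC.
Qed.

Lemma poly_block_diag i : poly_block i i = 54.
Proof.
rewrite /poly_block /chain_dist eqxx (eq_bigr (fun=> 9)) ?sum_nat_const ?card_ord //.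
by move=> a _; apply: sum_hexd.
Qed.

Lemma poly_block_lt i j : i < j -> poly_block i j = 108 + 36 * (j - i + links d i j).
Proof.
move=> ltij; rewrite /poly_block /chain_dist (ltn_eqF ltij) ltij.
under eq_bigr => a _ do rewrite sum_I6_addl /entryd sum_hexd.
rewrite big_split /= -big_distrr /= !big_split /= !sum_nat_const !card_ord /exitd sum_hexd_l.
lia.
Qed.

Lemma spiro_block_row i j a : i < j ->
  \sum_b (if kept d i a && kept d j b then chain_dist d 0 i a j b else 0) =
  if kept d i a then 5 * (exitd d i a + links d i j) + 9 else 0.
Proof.
move=> ltij; case: (kept d i a); last by rewrite big1.
have j_gt0 : 0 < j := leq_ltn_trans (leq0n i) ltij.
rewrite -big_mkcond /kept j_gt0 /= big_neq_sub /chain_dist (ltn_eqF ltij) ltij.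
by rewrite sum_I6_addl /entryd sum_hexd hexdxx; lia.
Qed.

Lemma spiro_block0_lt j : 0 < j -> spiro_block 0 j = 99 + 30 * links d 0 j.
Proof.
move=> j_gt0; rewrite /spiro_block; under eq_bigr => a _ do rewrite spiro_block_row //.
rewrite /kept /= big_split /= -big_distrr /= big_split /= /exitd sum_hexd_l.
by rewrite !sum_nat_const !card_ord; lia.
Qed.

Lemma spiro_block_lt i j : 0 < i -> i < j ->
  spiro_block i j + 5 * link d i = 90 + 25 * links d i j.
Proof.
move=> i_gt0 ltij; rewrite /spiro_block; under eq_bigr => a _ do rewrite spiro_block_row //.
rewrite -big_mkcond /kept i_gt0 /= big_neq_sub /= {2}/exitd -/(link d i).
rewrite big_split /= -big_distrr /= big_split /= /exitd sum_hexd_l.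
have : link d i <= 3 := hexd_le3 _ _.
by rewrite !sum_nat_const !card_ord; lia.
Qed.

Lemma spiro_block_diag0 : spiro_block 0 0 = 54.
Proof.
rewrite /spiro_block /kept /chain_dist /= (eq_bigr (fun=> 9)) ?sum_nat_const ?card_ord //.
by move=> a _; apply: sum_hexd.
Qed.

Lemma spiro_block_diag i : 0 < i -> spiro_block i i = 36.
Proof.
move=> i_gt0; rewrite /spiro_block /kept i_gt0 /= /chain_dist eqxx.
set c := cnat d i.
rewrite (eq_bigr (fun a => if a != c then 9 - hexd a c else 0)); last first.
  by move=> a _; case: (a != c) => /=; [rewrite -big_mkcond big_neq_sub sum_hexd | rewrite big1].
rewrite -big_mkcond big_neq_sub /= hexdxx sumnB => [|a _]; last exact: leq_trans (hexd_le3 a c) _.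
by rewrite sum_hexd_l sum_nat_const card_ord.
Qed.
End Blocks.

Definition pair_sum (n : nat) (F : nat -> nat -> nat) : nat :=
  \sum_(i < n) \sum_(j < n | i < j) F i j.

Section PairSums.
Variable n : nat.

Lemma eq_pair_sum (F G : nat -> nat -> nat) :
  (forall i j, i < j -> F i j = G i j) -> pair_sum n F = pair_sum n G.
Proof. by move=> eqFG; apply: eq_bigr => i _; apply: eq_bigr => j; apply: eqFG. Qed.

Lemma pair_sum_lin a b c e (F G H K : nat -> nat -> nat) :
  pair_sum n (fun i j => a * F i j + b * G i j + c * H i j + e * K i j) =
  a * pair_sum n F + b * pair_sum n G + c * pair_sum n H + e * pair_sum n K.
Proof.
rewrite /pair_sum !big_distrr -!big_split; apply: eq_bigr => i _.
by rewrite !big_distrr -!big_split.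
Qed.

Lemma pair_sum_first (F : nat -> nat) :
  pair_sum n (fun i j => if i == 0 then F j else 0) = \sum_(j < n | 0 < j) F j.
Proof.
case: n => [|m]; first by rewrite /pair_sum !big_ord0.
rewrite /pair_sum big_ord_recl /= [X in _ + X]big1 ?addn0 => [|i _]; last by rewrite big1.
by apply: eq_bigr.
Qed.

Lemma pair_sum_left (F : nat -> nat) :
  pair_sum n (fun i j => F i) = \sum_(j < n) \sum_(i < j) F i.
Proof.
rewrite /pair_sum (exchange_big_dep xpredT) //=; apply: eq_bigr => j _.
by rewrite (big_ord_widen_cond n xpredT F (ltnW (ltn_ord j))).
Qed.
End PairSums.

Lemma sum_setT (T : finType) (F : T -> nat) : \sum_(u in [set: T]) F u = \sum_u F u.
Proof. by apply: eq_bigl => u; rewrite in_setT. Qed.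

Lemma sum_vtx n (F : vtx n -> nat) : \sum_u F u = \sum_(i < n) \sum_(a < 6) F (i, a).
Proof. by rewrite pair_big; apply: eq_bigr => -[]. Qed.

Lemma sum_vtx2 n (F : vtx n -> vtx n -> nat) :
  \sum_u \sum_v F u v = \sum_(i < n) \sum_(j < n) \sum_(a < 6) \sum_(b < 6) F (i, a) (j, b).
Proof.
rewrite sum_vtx; apply: eq_bigr => i _.
by rewrite (eq_bigr _ (fun a _ => sum_vtx (F (i, a)))) exchange_big.
Qed.

Section WienerBlocks.
Variables (n : nat) (d : chain_data n).

Lemma W_poly_blocks : W_poly d = 27 * n + pair_sum n (poly_block d).
Proof.
rewrite /W_poly /wiener.
have -> : \sum_(u in [set: vtx n]) \sum_(v in [set: vtx n]) gdist (poly_adj d) u v =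
          \sum_(i < n) \sum_(j < n) poly_block d i j.
  rewrite sum_setT; under eq_bigr => u _ do rewrite sum_setT.
  by under eq_bigr => u _ do under eq_bigr => v _ do rewrite gdist_poly; rewrite sum_vtx2.
rewrite sum_sym_ord => [|i j]; last exact: poly_blockC.
rewrite (eq_bigr (fun=> 54)) => [|i _]; last exact: poly_block_diag.
rewrite sum_nat_const card_ord /pair_sum; set X := \sum_(i < n) _.
by rewrite (_ : n * 54 + 2 * X = (27 * n + X) * 2) ?mulnK //; lia.
Qed.

Lemma sum_spiro_block_diag : 0 < n -> \sum_(i < n) spiro_block d i i = 36 * n + 18.
Proof.
case: n d => [//|m] c _; rewrite big_ord_recl /= spiro_block_diag0.
rewrite (eq_bigr (fun=> 36)) => [|i _]; last exact: spiro_block_diag.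
by rewrite sum_nat_const card_ord; lia.
Qed.

Hypothesis d_valid : valid_chain d.

Lemma W_spiro_blocks : 0 < n -> W_spiro d = 18 * n + 9 + pair_sum n (spiro_block d).
Proof.
move=> n_gt0; rewrite /W_spiro /wiener.
have -> : \sum_(u in spiro_vertices d) \sum_(v in spiro_vertices d) gdist (spiro_adj d) u v =
          \sum_(i < n) \sum_(j < n) spiro_block d i j.
  rewrite big_mkcond (eq_bigr (fun u => \sum_v
      (if (u \in spiro_vertices d) && (v \in spiro_vertices d) then vdist d 0 u v else 0))).
    rewrite sum_vtx2; do 4!apply: eq_bigr => ? _.
    by rewrite !spiro_verticesE.
  move=> u _; case: ifP => u_sp; last by rewrite big1.
  by rewrite big_mkcond; apply: eq_bigr => v _; case: ifP => v_sp //; apply: gdist_spiro.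
rewrite sum_sym_ord => [|i j]; last exact: spiro_blockC.
rewrite sum_spiro_block_diag // /pair_sum; set X := \sum_(i < n) _.
by rewrite (_ : 36 * n + 18 + 2 * X = (18 * n + 9 + X) * 2) ?mulnK //; lia.
Qed.
End WienerBlocks.

Section Exchange.
Variable n : nat.

Lemma sum_head_links (d : chain_data n) :
  pair_sum n (fun i j => if i == 0 then links d 0 j else 0) =
  pair_sum n (fun i j => if 0 < i then link d i else 0).
Proof.
rewrite pair_sum_first pair_sum_left big_mkcond; apply: eq_bigr => j _.
by rewrite -links0E; case: posnP => // ->; rewrite /links big_geq.
Qed.

Variables (d d' : chain_data n).

(* With L = links i j, the polyphenyl block is 108 + 36 (j - i + L) and the spiro block is
   99 + 30 L for i = 0, 90 + 25 L - 5 link i for i > 0.  The weights 25 and 36 match the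
   coefficients of L up to a surplus 180 links 0 j when i = 0 and a defect 180 link i when
   i > 0, and these have the same total over all pairs (sum_head_links). *)
Lemma block_exchange i j : i < j ->
  25 * poly_block d i j + 180 * (if i == 0 then links d 0 j else 0) +
  36 * spiro_block d' i j + 180 * (if 0 < i then link d' i else 0) =
  25 * poly_block d' i j + 180 * (if i == 0 then links d' 0 j else 0) +
  36 * spiro_block d i j + 180 * (if 0 < i then link d i else 0).
Proof.
move=> ltij; rewrite !poly_block_lt //; case: (posnP i) => [i0|i_gt0].
  by rewrite i0 !spiro_block0_lt -?i0 //; lia.
have := spiro_block_lt d i_gt0 ltij; have := spiro_block_lt d' i_gt0 ltij.
lia.
Qed.

Lemma pair_sum_blocks_exchange :
  25 * pair_sum n (poly_block d) + 36 * pair_sum n (spiro_block d') =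
  25 * pair_sum n (poly_block d') + 36 * pair_sum n (spiro_block d).
Proof.
have := @eq_pair_sum n _ _ block_exchange.
by rewrite !pair_sum_lin !sum_head_links; lia.
Qed.
End Exchange.

Section ChainComparison.
Variables (n : nat) (d d' : chain_data n).
Hypotheses (n_gt0 : 0 < n) (d_valid : valid_chain d) (d'_valid : valid_chain d').

Lemma W_exchange : 25 * W_poly d + 36 * W_spiro d' = 25 * W_poly d' + 36 * W_spiro d.
Proof.
rewrite !W_poly_blocks (W_spiro_blocks d_valid n_gt0) (W_spiro_blocks d'_valid n_gt0).
by have := pair_sum_blocks_exchange d d'; lia.
Qed.

Lemma W_poly_ltE : (W_poly d < W_poly d') = (W_spiro d < W_spiro d').
Proof. by have := W_exchange => exchange; apply/idP/idP; lia. Qed.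
End ChainComparison.

Lemma size_undup_map_eq (X Y Z : eqType) (f : X -> Y) (g : X -> Z) (t : seq X) :
  {in t &, forall x y, (f x == f y) = (g x == g y)} ->
  size (undup (map f t)) = size (undup (map g t)).
Proof.
elim: t => //= x t IHt fg_eq.
have fg_eq_t : {in t &, forall y z, (f y == f z) = (g y == g z)}.
  by move=> y z yt zt; apply: fg_eq; rewrite inE ?yt ?zt orbT.
have -> : (f x \in map f t) = (g x \in map g t).
  apply/mapP/mapP => -[y yt /eqP xy]; exists y => //; apply/eqP;
    by [rewrite -fg_eq ?inE ?eqxx ?yt ?orbT | rewrite fg_eq ?inE ?eqxx ?yt ?orbT].
by case: ifP => _ //=; rewrite IHt.
Qed.

Section KthTransport.
Variables (X : eqType) (s : seq X) (f g : X -> nat).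
Hypothesis fg_lt : {in s &, forall x y, (f x < f y) = (g x < g y)}.

Lemma size_undup_filter_map (r : rel nat) x :
  {in s &, forall y z, r (f y) (f z) = r (g y) (g z)} -> x \in s ->
  size (undup [seq y <- map f s | r y (f x)]) = size (undup [seq y <- map g s | r y (g x)]).
Proof.
move=> fg_r xs; rewrite !filter_map.
rewrite (@eq_in_filter _ _ (preim g (r^~ (g x)))) => [|y ys]; last exact: fg_r.
apply: size_undup_map_eq => y z; rewrite !mem_filter => /andP[_ ys] /andP[_ zs].
have eqn_lt p q : (p == q) = ~~ (p < q) && ~~ (q < p) by rewrite -!leqNgt andbC -eqn_leq.
by rewrite !eqn_lt (fg_lt ys zs) (fg_lt zs ys).
Qed.

Lemma kth_min_map k x : x \in s -> kth_min k (map f s) (f x) = kth_min k (map g s) (g x).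
Proof.
move=> xs; rewrite /kth_min !map_f //=; congr (_ == _).
exact: (@size_undup_filter_map (fun a b => a < b) x fg_lt xs).
Qed.

Lemma kth_max_map k x : x \in s -> kth_max k (map f s) (f x) = kth_max k (map g s) (g x).
Proof.
move=> xs; rewrite /kth_max !map_f //=; congr (_ == _).
apply: (@size_undup_filter_map (fun a b => b < a) x _ xs) => y z ys zs; exact: fg_lt.
Qed.
End KthTransport.

Theorem theorem4p2 (n : nat) (hn : 4 <= n) (d : chain_data n)
    (hd : valid_chain d) (k : nat) (hk : 1 <= k <= 3) :
  (kth_min k (poly_W_values n) (W_poly d) <->
   kth_min k (spiro_W_values n) (W_spiro d)) /\
  (kth_max k (poly_W_values n) (W_poly d) <->
   kth_max k (spiro_W_values n) (W_spiro d)).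
Proof.
have n_gt0 : 0 < n by apply: leq_trans hn.
set chains := [seq c <- enum (chain_data n) | valid_chain c].
have d_chain : d \in chains by rewrite mem_filter hd mem_enum.
have W_lt : {in chains &, forall c c', (W_poly c < W_poly c') = (W_spiro c < W_spiro c')}.
  by move=> c c'; rewrite !mem_filter => /andP[c_valid _] /andP[c'_valid _]; apply: W_poly_ltE.
rewrite /poly_W_values /spiro_W_values.
rewrite (kth_min_map (f := @W_poly n) (g := @W_spiro n) W_lt k d_chain).
by rewrite (kth_max_map (f := @W_poly n) (g := @W_spiro n) W_lt k d_chain).
Qed.
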